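(* Let $V\subseteq R_d$ be a Gotzmann monomial vector space and let $V=V_0\oplus x_iV_1$ be its $x_i$-decomposition. Then $V_0$ is Gotzmann in $Q=R/(x_i)$.
   Context: Let $\Bbbk$ be a field, $R=\Bbbk[x_1,\dots,x_n]/(x_1^2,\dots,x_n^2)$, $R_d$ its degree-$d$ component. A monomial vector space is a subspace of some $R_d$ spanned by monomials; for such $V$, $\mathbf m_1V$ is the span of $\{x_jm\}$ over monomials $m\in V$ and all $j$. A subspace $V\subseteq R_d$ is Gotzmann if $|\mathbf m_1V|\le|\mathbf m_1W|$ for every subspace $W\subseteq R_d$ with $|W|=|V|$ ($|\cdot|$ denotes dimension). Fix a variable $x_i$, let $Q=R/(x_i)$ (the analogous squarefree ring in the variables other than $x_i$, with $\mathbf n_1$ the analogous operation and Gotzmann defined analogously in $Q$). The $x_i$-decomposition of a monomial vector space $V\subseteq R_d$ is $V=V_0\oplus x_iV_1$, where $V_0\subseteq Q_d$ is spanned by the monomials of $V$ not divisible by $x_i$ and $V_1\subseteq Q_{d-1}$ is spanned by the monomials $m$ with $x_im\in V$. *)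

From HB Require Import structures.
From mathcomp Require Import all_boot all_order all_algebra.
Set Implicit Arguments. Unset Strict Implicit. Unset Printing Implicit Defensive.
Import GRing.Theory.
Local Open Scope ring_scope.

(* The squarefree algebra R = K[x_0..x_{n-1}]/(x_0^2,...,x_{n-1}^2), as a
   K-vector space with basis the squarefree monomials x_S, S : {set 'I_n}.
   An element is its coefficient function S |-> coefficient of x_S. *)
Definition sqf (K : fieldType) (n : nat) := {ffun {set 'I_n} -> K^o}.

Definition mono (K : fieldType) (n : nat) (S : {set 'I_n}) : sqf K n :=
  [ffun T : {set 'I_n} => if T == S then 1 else 0].

(* multiplication by the variable x_j : x_j * x_T = x_(T u {j}) if j \notin T,
   and 0 otherwise. *)
Definition xmul (K : fieldType) (n : nat) (j : 'I_n) (f : sqf K n) : sqf K n :=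
  [ffun T : {set 'I_n} => if j \in T then f (T :\ j) else 0].

(* The degree-d component of the squarefree algebra in the variables
   {x_j | j \in A}: span of the monomials x_S with S \subset A, #|S| = d.
   For A = [set: 'I_n] this is R_d; for A = ~: [set i] this is Q_d with
   Q = R/(x_i) (identified with the span of monomials not divisible by x_i). *)
Definition homog (K : fieldType) (n : nat) (A : {set 'I_n}) (d : nat)
  : {vspace sqf K n} :=
  <<[seq mono K X | X <- enum [set X : {set 'I_n} | (X \subset A) && (#|X| == d)]]>>%VS.

Definition m1 (K : fieldType) (n : nat) (A : {set 'I_n}) (W : {vspace sqf K n})
  : {vspace sqf K n} :=
  (\sum_(j in A) (linfun (xmul j) @: W))%VS.

Definition gotzmann (K : fieldType) (n : nat) (A : {set 'I_n}) (d : nat)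
  (V : {vspace sqf K n}) : Prop :=
  (V <= homog K A d)%VS /\
  forall W : {vspace sqf K n}, (W <= homog K A d)%VS -> \dim W = \dim V ->
    (\dim (m1 A V) <= \dim (m1 A W))%N.

Definition monomial_space (K : fieldType) (n : nat) (d : nat)
  (V : {vspace sqf K n}) : Prop :=
  exists M : {set {set 'I_n}}, (forall S, S \in M -> #|S| = d) /\
    V = <<[seq mono K X | X <- enum M]>>%VS.

Definition xdecomp0 (K : fieldType) (n : nat) (i : 'I_n) (d : nat)
  (V : {vspace sqf K n}) : {vspace sqf K n} :=
  <<[seq mono K X | X <- enum [set X : {set 'I_n} |
        [&& #|X| == d, i \notin X & mono K X \in V]]]>>%VS.

From HB Require Import structures.
From mathcomp Require Import all_boot all_order all_algebra.

Set Implicit Arguments.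
Unset Strict Implicit.
Unset Printing Implicit Defensive.

Import GRing.Theory.

(* A monomial space spanned by a family M of d-subsets has m_1 spanned by the upper
   shadow of M, and taking leading monomials in the order of binary weights
   (S |-> sum_(t in S) 2^t) shows that dim m_1 W is at least the shadow of the
   leading-term family of W.  Hence V is Gotzmann iff M has minimal upper shadow among
   families of its size.  Compressions (replacing U by V inside a set, with V heavier
   than U) show that initial segments of the binary order have minimal shadow; they are
   nested, and the shadow of an initial segment is again one.  Writing
   M = M_0 + x_i M_1, the shadow splits as |dM| = |dM_0| + |M_0 u dM_1|.  For F of the
   size of M_0, replace F and M_1 by initial segments L_0 and L_1: minimality of M
   against L_0 + x_i L_1 gives |dM_0| + |M_0 u dM_1| <= |dL_0| + max(|L_0|, |dL_1|),
   and the maximum is at most |M_0 u dM_1|, so |dM_0| <= |dL_0| <= |dF|. *)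

(** * Binary order and compressions *)

Section BinaryOrder.
Variable n : nat.
Implicit Types (A B S U V : {set 'I_n}).

Definition binary S : nat := \sum_(t in S) 2 ^ t.

Lemma binaryD1 S j : j \in S -> binary S = binary (S :\ j) + 2 ^ j.
Proof. by move=> jS; rewrite /binary (big_setD1 _ jS) addnC. Qed.

Lemma expn_le_binary S j : j \in S -> 2 ^ j <= binary S.
Proof. by move=> /binaryD1 ->; apply: leq_addl. Qed.

Lemma binary_lt_expn S m : (forall t, t \in S -> t < m) -> binary S < 2 ^ m.
Proof.
elim: m S => [|m IH] S ltSm.
  suff -> : S = set0 by rewrite /binary big_set0.
  by apply/setP=> t; rewrite inE; apply/negbTE/negP=> /ltSm.
have [/exists_inP [t tS /eqP tm] | noSm] := boolP [exists t in S, val t == m].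
  rewrite (binaryD1 tS) tm expnS mul2n -addnn ltn_add2r; apply: IH => u.
  rewrite !inE => /andP [ut uS]; move: (ltSm u uS); rewrite ltnS leq_eqVlt.
  by case/orP => [/eqP|//]; rewrite -tm => /val_inj ue; rewrite ue eqxx in ut.
apply: (leq_trans (IH S _)); last by rewrite leq_exp2l.
move=> t tS; move: (ltSm t tS); rewrite ltnS leq_eqVlt => /orP [/eqP tm|//].
by move: noSm; rewrite negb_exists_in => /forall_inP /(_ t tS); rewrite -tm eqxx.
Qed.

Lemma binary_setID A B : binary A = binary (A :&: B) + binary (A :\: B).
Proof. exact: big_setID. Qed.

Lemma binary_setU A B : [disjoint A & B] -> binary (A :|: B) = binary A + binary B.
Proof. by move=> dAB; rewrite /binary -bigU //; apply: eq_bigl => x; rewrite !inE. Qed.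

Lemma binary_setDS A B : B \subset A -> binary A = binary B + binary (A :\: B).
Proof. by move=> sBA; rewrite (binary_setID A B) (setIidPr sBA). Qed.

Lemma binary_lt_max U V m : [disjoint U & V] -> m \in V ->
  (forall t, t \in U :|: V -> t <= m) -> binary U < binary V.
Proof.
move=> dUV mV maxm; apply: (leq_trans _ (expn_le_binary mV)); apply: binary_lt_expn => t tU.
rewrite ltn_neqAle (maxm t) ?inE ?tU // andbT; apply/eqP => /val_inj tm.
by move: dUV; rewrite disjoint_sym => /disjointFr /(_ mV); rewrite -tm tU.
Qed.

Lemma set_max S : S != set0 -> exists2 m, m \in S & forall t, t \in S -> t <= m.
Proof.
by case/set0Pn => t0 t0S; case: (arg_maxnP (@nat_of_ord n) t0S) => m; exists m.
Qed.

Lemma max_binary_lt U V : [disjoint U & V] -> binary U < binary V ->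
  exists2 m, m \in V & forall t, t \in U :|: V -> t <= m.
Proof.
move=> dUV ltUV; have /set_max [m] : U :|: V != set0.
  apply: contraTneq ltUV => /setP UV0.
  suff [-> ->] : U = set0 /\ V = set0 by rewrite ltnn.
  by split; apply/setP => x; move: (UV0 x); rewrite !inE; case: (x \in U); case: (x \in V).
rewrite inE => /orP [mU | mV] maxm; last by exists m.
have ltVU : binary V < binary U.
  by apply: (binary_lt_max _ mU) => [|t]; rewrite 1?disjoint_sym // setUC; apply: maxm.
by move: ltUV; rewrite ltnNge ltnW.
Qed.

Lemma binary_inj : injective binary.
Proof.
move=> A B eqAB; apply/eqP/negPn/negP => neqAB.
have dAB : [disjoint A :\: B & B :\: A].
  by rewrite -setI_eq0; apply/eqP/setP => x; rewrite !inE; case: (x \in A); rewrite ?andbF.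
have /set_max [m] : (A :\: B) :|: (B :\: A) != set0.
  apply: contra neqAB => /eqP/setP ABA; apply/eqP/setP => x.
  by move: (ABA x); rewrite !inE; case: (x \in A); case: (x \in B).
have eqD : binary (A :\: B) = binary (B :\: A).
  apply/eqP; move: eqAB; rewrite (binary_setID A B) (binary_setID B A) setIC.
  by move=> /eqP; rewrite eqn_add2l.
rewrite inE => /orP [mAB | mBA] maxm.
  have : binary (B :\: A) < binary (A :\: B).
    by apply: (binary_lt_max _ mAB) => [|t]; rewrite 1?disjoint_sym // setUC; apply: maxm.
  by rewrite eqD ltnn.
by have := binary_lt_max dAB mBA maxm; rewrite eqD ltnn.
Qed.

End BinaryOrder.

Section Compression.
Variable n : nat.
Implicit Types (A B T U V X Y N : {set 'I_n}) (F G L M : {set {set 'I_n}}) (r : nat).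

Definition ushadow N F := [set Y : {set 'I_n} | [exists j in N, (j \in Y) && (Y :\ j \in F)]].

Lemma ushadowP N F Y :
  reflect (exists j, [/\ j \in N, j \in Y & Y :\ j \in F]) (Y \in ushadow N F).
Proof.
rewrite inE; apply: (iffP exists_inP) => [[j jN /andP [jY YF]] | [j [jN jY YF]]].
  by exists j.
by exists j; rewrite ?jY.
Qed.

Definition ksets N r := [set X : {set 'I_n} | (X \subset N) && (#|X| == r)].

Lemma ksets0 N : ksets N 0 = [set set0].
Proof. by apply/setP => X; rewrite !inE cards_eq0 andb_idl // => /eqP ->; apply: sub0set. Qed.

Definition compressible U V A := (U \subset A) && [disjoint V & A].
Definition compress U V A := if compressible U V A then (A :\: U) :|: V else A.
Definition compressF U V F :=
  (F :&: compress U V @^-1: F) :|: compress U V @: (F :\: compress U V @^-1: F).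
Definition compressed U V F := forall A, A \in F -> compress U V A \in F.

Lemma compressE U V A : compressible U V A -> compress U V A = (A :\: U) :|: V.
Proof. by rewrite /compress => ->. Qed.

Lemma compressN U V A : ~~ compressible U V A -> compress U V A = A.
Proof. by rewrite /compress => /negPf ->. Qed.

Lemma compressible_moved U V A : compress U V A != A -> compressible U V A.
Proof. by apply: contraR => /compressN ->. Qed.

Lemma compressK U V A : [disjoint U & V] -> compressible U V A ->
  (compress U V A :\: V) :|: U = A.
Proof.
move=> dUV cA; rewrite compressE //; case/andP: cA => /subsetP sUA dVA.
apply/setP => x; rewrite !inE; case: (boolP (x \in V)) => xV /=.
  by rewrite (disjointFr dVA xV) (disjointFl dUV xV).
by case: (boolP (x \in U)) => [/sUA -> | _]; rewrite ?orbT ?orbF.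
Qed.

Lemma compress_inj U V : [disjoint U & V] ->
  {in [pred A | compressible U V A] &, injective (compress U V)}.
Proof.
by move=> dUV A B cA cB eqAB; rewrite -(compressK dUV cA) -(compressK dUV cB) eqAB.
Qed.

Lemma mem_compressF U V F B : (B \in compressF U V F) =
  (B \in F) && (compress U V B \in F) ||
  (B \in compress U V @: (F :\: compress U V @^-1: F)).
Proof. by rewrite !inE. Qed.

Lemma compressFP U V F B : B \in compressF U V F ->
  B \in F /\ compress U V B \in F \/
  exists2 A, A \in F /\ compress U V A \notin F & B = compress U V A.
Proof.
rewrite mem_compressF => /orP [/andP [BF cBF] | /imsetP [A]]; first by left.
by rewrite !inE => /andP [nA AF] ->; right; exists A.
Qed.

Lemma disjoint_compressF U V F :
  [disjoint F :&: compress U V @^-1: F & compress U V @: (F :\: compress U V @^-1: F)].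
Proof.
rewrite -setI_eq0; apply/eqP/setP => B; rewrite !inE.
apply/negbTE/andP => [[/andP [BF _] /imsetP [A]]].
by rewrite !inE => /andP [nA _] eqBA; rewrite -eqBA BF in nA.
Qed.

Lemma compress_inj_moved U V F : [disjoint U & V] ->
  {in F :\: compress U V @^-1: F &, injective (compress U V)}.
Proof.
move=> dUV A B; rewrite !inE => /andP [nA AF] /andP [nB BF].
apply: (compress_inj dUV); rewrite inE; apply: compressible_moved.
  by apply: contraNneq nA => ->.
by apply: contraNneq nB => ->.
Qed.

Lemma card_compressF U V F : [disjoint U & V] -> #|compressF U V F| = #|F|.
Proof.
move=> dUV; rewrite cardsU (disjoint_setI0 (disjoint_compressF U V F)) cards0 subn0.
by rewrite card_in_imset ?cardsID //; apply: compress_inj_moved.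
Qed.

Lemma compressF_fixed U V G T : compress U V T = T -> T \in G -> T \in compressF U V G.
Proof. by move=> fixT TG; rewrite mem_compressF fixT TG. Qed.

Lemma compressF_moved U V G A : A \in G -> compress U V A \notin G ->
  compress U V A \in compressF U V G.
Proof. by move=> AG nA; rewrite mem_compressF imset_f ?orbT // !inE nA AG. Qed.

Lemma compress_ksets N r U V A : #|U| = #|V| -> V \subset N ->
  A \in ksets N r -> compress U V A \in ksets N r.
Proof.
move=> eUV sVN; rewrite !inE => /andP [sAN /eqP <-].
have [cA | /compressN ->] := boolP (compressible U V A); last by rewrite sAN eqxx.
case/andP: (cA) => sUA dVA; rewrite compressE // subUset sVN (subset_trans (subsetDl _ _)) //=.
have dAUV : (A :\: U) :&: V = set0.
  by rewrite setIC; apply: disjoint_setI0; apply: disjointWr dVA; apply: subsetDl.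
by rewrite cardsU dAUV cards0 subn0 cardsDS // -eUV subnK ?subset_leq_card.
Qed.

Lemma binary_compress U V A : compressible U V A ->
  binary (compress U V A) + binary U = binary A + binary V.
Proof.
move=> cA; rewrite compressE //; case/andP: cA => sUA dVA.
rewrite binary_setU; last by rewrite disjoint_sym; apply: disjointWr dVA; apply: subsetDl.
by rewrite (binary_setDS sUA) addnAC [binary U + _]addnC.
Qed.

Section ShadowOfCompression.
Variables (N U V : {set 'I_n}) (F : {set {set 'I_n}}).
Hypotheses (sVN : V \subset N) (dUV : [disjoint U & V]) (eUV : #|U| = #|V|).
(* The induction hypothesis of the compression argument, on #|U|. *)
Hypothesis compressed_below :
  forall x, x \in U -> exists2 y, y \in V & compressed (U :\ x) (V :\ y) F.

Lemma compress_ushadow T j : j \in N -> j \in T -> T :\ j \in F ->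
  (j \notin U -> compress U V (T :\ j) \in F) -> compress U V T \in ushadow N F.
Proof.
move=> jN jT TjF compTj.
have [cT | /compressN ->] := boolP (compressible U V T); last by apply/ushadowP; exists j.
case/andP: (cT) => sUT dVT; rewrite compressE //.
have [jU | jU] := boolP (j \in U).
  have [y yV /(_ _ TjF)] := compressed_below jU.
  have cTj : compressible (U :\ j) (V :\ y) (T :\ j).
    by rewrite /compressible setSD //=; apply: (disjointW _ _ dVT); apply: subsetDl.
  rewrite compressE // => compTjF; apply/ushadowP; exists y; split.
  - exact: (subsetP sVN).
  - by rewrite !inE yV orbT.
  - suff -> : (T :\: U :|: V) :\ y = (T :\ j) :\: (U :\ j) :|: V :\ y by [].
    apply/setP => x; rewrite !inE.
    have [->|_] := eqVneq x y; first by rewrite (disjointFr dVT yV) !andbF.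
    have [->|_] := eqVneq x j; last by [].
    by rewrite jU (disjointFr dUV jU) andbF.
have cTj : compressible U V (T :\ j).
  by rewrite /compressible subsetD1 jU sUT /=; apply: disjointWr dVT; apply: subsetDl.
have := compTj jU; rewrite compressE // => compTjF; apply/ushadowP; exists j; split => //.
  by rewrite !inE jT jU.
suff -> : (T :\: U :|: V) :\ j = (T :\ j) :\: U :|: V by [].
apply/setP => x; rewrite !inE.
by have [->|_] := eqVneq x j; rewrite ?(disjointFl dVT jT) /= ?andbF.
Qed.

(* [T :\ j] was moved by the compression, so [T] contains [V] and is fixed by it; when
   [j \notin U], [T] is moreover the compression of [j |: A]. *)
Lemma ushadow_compressF_moved T j A : j \in N -> j \in T -> A \in F ->
  compress U V A \notin F -> T :\ j = compress U V A ->
  T \in compressF U V (ushadow N F).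
Proof.
move=> jN jT AF nA eTA.
have cA : compressible U V A by apply: compressible_moved; apply: contraNneq nA => ->.
case/andP: (cA) => sUA dVA.
have [v vV] : exists v, v \in V.
  apply/set0Pn; apply: contraNneq nA => V0.
  by move: eUV; rewrite compressE // V0 cards0 => /cards0_eq ->; rewrite setD0 setU0.
have sVT : V \subset T.
  by rewrite -(setD1K jT) eTA compressE //; apply/subsetP => x xV; rewrite !inE xV !orbT.
have fixT : compress U V T = T.
  by apply: compressN; apply/negP => /andP [_ /disjointFr /(_ vV)]; rewrite (subsetP sVT).
have jV : j \notin V.
  by move: (setD11 j T); rewrite eTA compressE // inE => /negbT/norP [].
have [jU | jU] := boolP (j \in U).
  apply: compressF_fixed fixT _; have [y yV /(_ _ AF)] := compressed_below jU.
  have cA' : compressible (U :\ j) (V :\ y) A.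
    rewrite /compressible (subset_trans (subsetDl _ _) sUA) /=.
    by apply: disjointWl dVA; apply: subsetDl.
  rewrite compressE // => compAF; apply/ushadowP; exists y; split.
  - exact: (subsetP sVN).
  - exact: (subsetP sVT).
  suff -> : T :\ y = (A :\: (U :\ j)) :|: (V :\ y) by [].
  apply/setP => x; rewrite -(setD1K jT) eTA compressE // !inE.
  have [->|_] := eqVneq x y; first by rewrite (disjointFr dVA yV) !andbF.
  by have [->|_] := eqVneq x j; rewrite ?(subsetP sUA j jU).
have jA : j \notin A.
  by move: (setD11 j T); rewrite eTA compressE // !inE jU /= => /negbT/norP [].
have cjA : compressible U V (j |: A).
  rewrite /compressible (subset_trans sUA (subsetUr _ _)) /= disjoint_sym.
  by rewrite disjoints_subset subUset sub1set inE jV /= -disjoints_subset disjoint_sym.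
have ejA : compress U V (j |: A) = T.
  rewrite compressE // -(setD1K jT) eTA compressE //; apply/setP => x; rewrite !inE.
  by have [->|_] := eqVneq x j; rewrite ?jU.
have jAup : j |: A \in ushadow N F by apply/ushadowP; exists j; rewrite setU11 setU1K.
have [TupF | nTupF] := boolP (T \in ushadow N F); first exact: compressF_fixed.
by rewrite -ejA; apply: compressF_moved; rewrite ?ejA.
Qed.

Lemma ushadow_compressF :
  ushadow N (compressF U V F) \subset compressF U V (ushadow N F).
Proof.
apply/subsetP => T /ushadowP [j [jN jT /compressFP [[TjF compTjF] | [A [AF nA] eTA]]]].
  have TupF : T \in ushadow N F by apply/ushadowP; exists j.
  by rewrite mem_compressF TupF (compress_ushadow jN jT TjF).
exact: (ushadow_compressF_moved jN jT AF nA eTA).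
Qed.

End ShadowOfCompression.

Definition good_pair N U V :=
  [&& U \subset N, V \subset N, [disjoint U & V], #|U| == #|V| & binary U < binary V].

Lemma good_pair_erase N U V x : good_pair N U V -> 1 < #|U| -> x \in U ->
  exists2 y, y \in V & good_pair N (U :\ x) (V :\ y).
Proof.
case/and5P => sUN sVN dUV /eqP eUV ltUV U_gt1 xU.
have [m mV maxm] := max_binary_lt dUV ltUV.
have [y] : exists y, y \in V :\ m.
  by apply/set0Pn; rewrite -card_gt0; move: U_gt1; rewrite eUV (cardsD1 m V) mV.
rewrite !inE => /andP [ym yV]; exists y => //; apply/and5P; split.
- by apply: subset_trans sUN; apply: subsetDl.
- by apply: subset_trans sVN; apply: subsetDl.
- by apply: disjointW dUV; apply: subsetDl.
- by move: eUV; rewrite (cardsD1 x U) (cardsD1 y V) xU yV => /eqP; rewrite eqn_add2l.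
have dUV' : [disjoint U :\ x & V :\ y] by apply: disjointW dUV; apply: subsetDl.
apply: (binary_lt_max dUV' (_ : m \in V :\ y)); first by rewrite !inE eq_sym ym.
move=> t; rewrite !inE => /orP [/andP [_ tU] | /andP [_ tV]]; apply: maxm.
  by rewrite inE tU.
by rewrite inE tV orbT.
Qed.

Lemma compress0 A : compress set0 set0 A = A.
Proof.
by rewrite compressE ?setD0 ?setU0 // /compressible sub0set disjoints_subset sub0set.
Qed.

Lemma good_pair_compressed_below N U V F : good_pair N U V ->
  (forall U' V', good_pair N U' V' -> #|U'| < #|U| -> compressed U' V' F) ->
  forall x, x \in U -> exists2 y, y \in V & compressed (U :\ x) (V :\ y) F.
Proof.
move=> gUV compF x xU; have [U_gt1 | U_le1] := ltnP 1 #|U|.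
  have [y yV gUV'] := good_pair_erase gUV U_gt1 xU; exists y => //.
  by apply: compF gUV' _; rewrite (cardsD1 x U) xU.
case/and5P: gUV => _ _ _ /eqP eUV _.
have Ux0 : #|U :\ x| = 0 by move: U_le1; rewrite (cardsD1 x U) xU; case: #|_|.
have [y yV] : exists y, y \in V.
  by apply/set0Pn; rewrite -card_gt0 -eUV; apply/card_gt0P; exists x.
exists y => // A AF; rewrite (cards0_eq Ux0) (_ : V :\ y = set0) ?compress0 //.
apply: cards0_eq; move: eUV; rewrite (cardsD1 x U) (cardsD1 y V) xU yV Ux0.
by move=> /eqP; rewrite eqn_add2l => /eqP <-.
Qed.

Definition weight F := \sum_(A in F) binary A.

Lemma weight_compressF U V F A0 : [disjoint U & V] -> binary U < binary V ->
  A0 \in F -> compress U V A0 \notin F -> weight F < weight (compressF U V F).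
Proof.
move=> dUV ltUV A0F nA0; set S := compress U V @^-1: F.
have cS A : A \in F :\: S -> compressible U V A.
  by rewrite !inE => /andP [nA AF]; apply: compressible_moved; apply: contraNneq nA => ->.
have lt_compress A : A \in F :\: S -> binary A < binary (compress U V A).
  by move/cS/binary_compress => eqA; rewrite -(ltn_add2r (binary U)) eqA ltn_add2l.
have -> : weight (compressF U V F) =
    weight (F :&: S) + \sum_(A in F :\: S) binary (compress U V A).
  rewrite /weight -[X in _ = _ + X](big_imset _ (compress_inj_moved (F := F) dUV)).
  by rewrite -bigU ?disjoint_compressF //; apply: eq_bigl => B; rewrite !inE.
have A0S : A0 \in F :\: S by rewrite !inE nA0.
rewrite /weight (big_setID S) ltn_add2l (bigD1 A0) //= [X in _ < X](bigD1 A0) //=.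
rewrite -addSn leq_add ?lt_compress //; apply: leq_sum => A /andP [AS _].
exact/ltnW/lt_compress.
Qed.

Lemma compressF_ksets N r U V F : good_pair N U V ->
  F \subset ksets N r -> compressF U V F \subset ksets N r.
Proof.
case/and5P=> _ sVN _ /eqP eUV _ /subsetP sF; apply/subsetP => B.
by case/compressFP => [[/sF //] | [A [/sF AF _] ->]]; apply: compress_ksets.
Qed.

Lemma exists_compressed N r F : F \subset ksets N r -> exists G,
  [/\ G \subset ksets N r, #|G| = #|F|, #|ushadow N G| <= #|ushadow N F| &
      forall U V, good_pair N U V -> compressed U V G].
Proof.
(* Take [G] of maximal weight: a good pair moving a set of [G] would give a heavier
   admissible family. *)
move=> sF.
pose P G := [&& G \subset ksets N r, #|G| == #|F| & #|ushadow N G| <= #|ushadow N F|].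
have PF : P F by rewrite /P sF eqxx leqnn.
have [G /and3P [sG /eqP cG uG] maxG] := arg_maxnP weight PF.
suff compG k U V : #|U| = k -> good_pair N U V -> compressed U V G.
  by exists G; split=> // U V; apply: compG.
elim/ltn_ind: k U V => k IH U V cU gUV A0 A0G; apply/negPn/negP => nA0.
have /and5P [_ sVN dUV /eqP eUV ltUV] := gUV.
have below := good_pair_compressed_below gUV
  (fun U' V' gUV' ltU' => IH _ (leq_trans ltU' (eq_leq cU)) U' V' erefl gUV').
have PG' : P (compressF U V G).
  rewrite /P compressF_ksets // card_compressF // cG eqxx /=.
  apply: leq_trans uG; rewrite -(card_compressF (ushadow N G) dUV).
  exact/subset_leq_card/ushadow_compressF.
by apply/negP: (maxG _ PG'); rewrite -ltnNge (weight_compressF dUV ltUV A0G nA0).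
Qed.

Definition initial_segment N r L := L \subset ksets N r /\
  forall B A, B \in L -> A \in ksets N r -> binary B <= binary A -> A \in L.

Lemma compressed_initial N r G : G \subset ksets N r ->
  (forall U V, good_pair N U V -> compressed U V G) -> initial_segment N r G.
Proof.
move=> sG compG; split=> // B A BG; have := subsetP sG B BG.
rewrite !inE => /andP [sBN /eqP cB] /andP [sAN /eqP cA] leBA.
have [-> // | neqAB] := eqVneq A B.
have ltBA : binary B < binary A.
  by rewrite ltn_neqAle leBA andbT; apply: contra_neq neqAB => /binary_inj.
have gBA : good_pair N (B :\: A) (A :\: B).
  rewrite /good_pair !(subset_trans (subsetDl _ _)) //= !cardsD cA cB setIC eqxx /=.
  rewrite -setI_eq0 (_ : _ :&: _ = set0) ?eqxx /=; last first.
    by apply/setP => x; rewrite !inE; case: (x \in A); rewrite ?andbF.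
  by move: ltBA; rewrite (binary_setID B A) (binary_setID A B) setIC ltn_add2l.
have cB' : compressible (B :\: A) (A :\: B) B.
  rewrite /compressible subsetDl disjoint_sym -setI_eq0 /=; apply/eqP/setP => x.
  by rewrite !inE; case: (x \in B); rewrite ?andbF.
have := compG _ _ gBA B BG; rewrite compressE //.
suff -> : (B :\: (B :\: A)) :|: (A :\: B) = A by [].
by apply/setP => x; rewrite !inE; case: (x \in A); case: (x \in B).
Qed.

Lemma initial_compressed N r L : initial_segment N r L ->
  forall U V, good_pair N U V -> compressed U V L.
Proof.
case=> sL iL U V /and5P [_ sVN _ /eqP eUV ltUV] A AL.
have [cA | /compressN -> //] := boolP (compressible U V A).
apply: (iL A) => //; first exact: compress_ksets (subsetP sL A AL).
by rewrite -(leq_add2r (binary U)) binary_compress // leq_add2l ltnW.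
Qed.

Lemma ushadow_ksets N r L : L \subset ksets N r -> ushadow N L \subset ksets N r.+1.
Proof.
move=> /subsetP sL; apply/subsetP => Y /ushadowP [j [jN jY /sL]].
rewrite !inE => /andP [sYN /eqP cY]; rewrite (cardsD1 j Y) jY cY eqxx andbT.
by rewrite -(setD1K jY) subUset sub1set jN.
Qed.

Lemma initial_ushadow N r L :
  initial_segment N r L -> initial_segment N r.+1 (ushadow N L).
Proof.
move=> iL; have compL := initial_compressed iL.
apply: compressed_initial; first by apply: ushadow_ksets; case: iL.
move=> U V gUV T /ushadowP [j [jN jT TjL]]; have /and5P [_ sVN dUV _ _] := gUV.
apply: (compress_ushadow sVN dUV _ jN jT TjL); last by move=> _; apply: compL.
exact: good_pair_compressed_below gUV (fun U' V' gUV' _ => compL U' V' gUV').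
Qed.

Lemma initial_total N r L1 L2 : initial_segment N r L1 -> initial_segment N r L2 ->
  (L1 \subset L2) || (L2 \subset L1).
Proof.
case=> sL1 iL1 [sL2 iL2]; have [// | /subsetPn [B BL1 nBL2]] := boolP (L1 \subset L2).
apply/orP; right; apply/subsetP => A AL2; apply: (iL1 B) => //; first exact: (subsetP sL2).
rewrite leqNgt; apply: contra nBL2 => ltAB.
by apply: (iL2 A) => //; [exact: (subsetP sL1) | exact: ltnW].
Qed.

Lemma card_initial_setU N r L1 L2 : initial_segment N r L1 -> initial_segment N r L2 ->
  #|L1 :|: L2| = maxn #|L1| #|L2|.
Proof.
move=> iL1 iL2; case/orP: (initial_total iL1 iL2) => sL.
  by rewrite (setUidPr sL) (maxn_idPr (subset_leq_card sL)).
by rewrite (setUidPl sL) (maxn_idPl (subset_leq_card sL)).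
Qed.

Lemma exists_initial_segment N r F : F \subset ksets N r -> exists L,
  [/\ initial_segment N r L, #|L| = #|F| & #|ushadow N L| <= #|ushadow N F|].
Proof.
case/exists_compressed => G [sG cG uG compG].
by exists G; split=> //; apply: compressed_initial.
Qed.

Definition shadow_minimal N r M := M \subset ksets N r /\
  forall F, F \subset ksets N r -> #|F| = #|M| -> #|ushadow N M| <= #|ushadow N F|.

End Compression.

(** * Monomial subspaces and leading terms *)

Section MonomialSpans.
Local Open Scope ring_scope.
Variables (K : fieldType) (n : nat).
Local Notation sq := (sqf K n).
Implicit Types (S T X Y : {set 'I_n}) (M : {set {set 'I_n}}) (f u : sq).

Lemma xmul_is_linear (j : 'I_n) : linear (@xmul K n j).
Proof.
by move=> a f g; apply/ffunP=> T; rewrite !ffunE; case: (j \in T); rewrite ?ffunE // scaler0 addr0.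
Qed.
HB.instance Definition _ (j : 'I_n) :=
  GRing.isLinear.Build K sq sq _ (@xmul K n j) (xmul_is_linear j).

Definition restrict M f : sq := [ffun T => if T \in M then f T else 0].

Lemma restrict_is_linear M : linear (restrict M).
Proof.
by move=> a f g; apply/ffunP=> T; rewrite !ffunE; case: (T \in M); rewrite ?ffunE // scaler0 addr0.
Qed.
HB.instance Definition _ M :=
  GRing.isLinear.Build K sq sq _ (restrict M) (restrict_is_linear M).

Definition monospan M : {vspace sq} := <<[seq mono K X | X <- enum M]>>%VS.

Lemma span_mono_vanish (s : seq {set 'I_n}) f :
  f \in <<[seq mono K X | X <- s]>>%VS -> forall Y, Y \notin s -> f Y = 0.
Proof.
elim: s f => [|X s IH] f /=; first by rewrite span_nil memv0 => /eqP -> Y _; rewrite ffunE.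
rewrite span_cons => /memv_addP [u /vlineP [k ->] [v /IH vanish_v ->]] Y.
by rewrite inE negb_or => /andP [YX Ys]; rewrite !ffunE (negPf YX) vanish_v // scaler0 add0r.
Qed.

Lemma monospanP M f : reflect (forall Y, Y \notin M -> f Y = 0) (f \in monospan M).
Proof.
apply: (iffP idP) => [fM Y YM | vanish_f].
  by apply: (span_mono_vanish fM); rewrite mem_enum.
have -> : f = \sum_(X in M) f X *: mono K X.
  apply/ffunP => Y; rewrite sum_ffunE.
  have [YM | YM] := boolP (Y \in M); last first.
    rewrite vanish_f // big1 // => X XM; rewrite !ffunE.
    by have [eYX | _] := eqVneq Y X; [rewrite eYX XM in YM | rewrite scaler0].
  rewrite (bigD1 Y) //= big1 ?addr0 => [|X /andP [_ XY]].
    by rewrite !ffunE eqxx -[RHS]/(f Y * 1) mulr1.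
  by rewrite !ffunE eq_sym (negPf XY) scaler0.
apply: rpred_sum => X XM; apply/rpredZ/memv_span/mapP; exists X => //.
by rewrite mem_enum.
Qed.

Lemma free_mono (s : seq {set 'I_n}) : uniq s -> free [seq mono K X | X <- s].
Proof.
elim: s => [|X s IH] /=; first by rewrite /free span_nil dimv0.
case/andP => Xs us; rewrite free_cons IH // andbT.
by apply/negP => /span_mono_vanish /(_ X Xs)/eqP; rewrite ffunE eqxx oner_eq0.
Qed.

Lemma dim_monospan M : \dim (monospan M) = #|M|.
Proof.
by have /eqP := free_mono (enum_uniq (mem M)); rewrite size_map -cardE.
Qed.

Lemma mono_monospan M X : (mono K X \in monospan M) = (X \in M).
Proof.
apply/idP/idP => [/monospanP vanish | XM]; last first.
  by apply/memv_span/mapP; exists X; rewrite ?mem_enum.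
by apply: contraT => /vanish/eqP; rewrite ffunE eqxx oner_eq0.
Qed.

Lemma monospanS M1 M2 : M1 \subset M2 -> (monospan M1 <= monospan M2)%VS.
Proof.
move=> /subsetP sM; apply/subvP => f /monospanP vanish; apply/monospanP => Y YM2.
by apply: vanish; apply: contra YM2; apply: sM.
Qed.

Lemma xmul_mono (j : 'I_n) (X : {set 'I_n}) : j \in X -> xmul j (mono K (X :\ j)) = mono K X.
Proof.
move=> jX; apply/ffunP => Z; rewrite !ffunE.
have [jZ | jZ] := boolP (j \in Z); last by case: eqVneq => // eZX; rewrite eZX jX in jZ.
congr (if _ then _ else _); apply/eqP/eqP => [eZX | -> //].
by rewrite -(setD1K jZ) -(setD1K jX) eZX.
Qed.

Lemma m1_monospan A M : m1 A (monospan M) = monospan (ushadow A M).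
Proof.
apply/eqP; rewrite eqEsubv; apply/andP; split.
  apply/subv_sumP => j jA; apply/subvP => g /memv_imgP [f fM ->]; rewrite lfunE /=.
  apply/monospanP => Y nY; rewrite ffunE; case: ifP => // jY.
  by move/monospanP: fM; apply; apply: contra nY => YjM; apply/ushadowP; exists j.
apply/span_subvP => g /mapP [Y]; rewrite mem_enum => /ushadowP [j [jA jY YjM]] ->.
apply: (sumv_sup j) => //; rewrite -(xmul_mono jY) -[xmul j _]lfunE.
by apply: memv_img; rewrite mono_monospan.
Qed.

Definition leading f S := f S != 0 /\ forall T, (binary S < binary T)%N -> f T = 0.

Lemma leading_exists f : f != 0 -> exists S, leading f S.
Proof.
move=> nz_f; have [S0 fS0] : exists S, f S != 0.
  apply/existsP; apply: contraNT nz_f; rewrite negb_exists => /forallP f0.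
  by apply/eqP/ffunP => S; rewrite ffunE; apply/eqP; rewrite -[_ == _]negbK f0.
have [S fS maxS] := arg_maxnP (@binary n) (fS0 : [pred S | f S != 0] S0).
by exists S; split=> // T; apply: contraTeq; rewrite -leqNgt; apply: maxS.
Qed.

(* [S] is a leading monomial of [U] iff [x_S] is congruent to an element of [U] modulo
   smaller monomials; unlike the existential form, this is decidable. *)
Definition lead_terms (U : {vspace sq}) :=
  [set S | mono K S \in (U + monospan [set T | (binary T < binary S)%N])%VS].

Lemma lead_termsP (U : {vspace sq}) S :
  reflect (exists2 u, u \in U & leading u S) (S \in lead_terms U).
Proof.
rewrite inE; apply: (iffP idP) => [/memv_addP [u Uu [w /monospanP w0 eS]] | [u Uu [uS uT]]].
  have ew : u = mono K S - w by rewrite eS addrK.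
  exists u => //; split=> [|T ltST]; rewrite ew !ffunE.
    by rewrite eqxx w0 ?inE ?ltnn // subr0 oner_eq0.
  rewrite w0 ?subr0; last by rewrite inE -leqNgt ltnW.
  by case: eqVneq => // eTS; rewrite eTS ltnn in ltST.
apply/memv_addP; exists ((u S)^-1 *: u); first exact: rpredZ.
exists (mono K S - (u S)^-1 *: u); last by rewrite addrC subrK.
apply/monospanP => T; rewrite inE -leqNgt leq_eqVlt => /orP [/eqP/binary_inj <- | ltST].
  by rewrite !ffunE eqxx -[_ *: _]/(_ * _) mulVf ?subrr.
rewrite !ffunE (uT T ltST) scaler0 subr0; case: eqVneq => // eTS.
by rewrite eTS ltnn in ltST.
Qed.

(* Elimination along the binary order: [restrict M u - u S *: x_S] only involves
   monomials of [M] smaller than [S]. *)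
Lemma mono_restrict_img (U : {vspace sq}) M :
  (forall S, S \in M -> exists2 u, u \in U & leading u S) ->
  forall S, S \in M -> mono K S \in (linfun (restrict M) @: U)%VS.
Proof.
move=> leadM; set P := (linfun (restrict M) @: U)%VS.
suff monoP k S : (binary S < k)%N -> S \in M -> mono K S \in P by move=> S; apply: monoP.
elim: k S => // k IH S ltSk SM; have [u Uu [uS uT]] := leadM S SM.
have lowerP : (monospan [set T in M | (binary T < binary S)%N] <= P)%VS.
  apply/span_subvP => g /mapP [T]; rewrite mem_enum inE => /andP [TM ltTS] ->.
  by apply: IH TM; apply: leq_trans ltTS _.
set g := linfun (restrict M) u - u S *: mono K S.
have gP : g \in P.
  apply: (subvP lowerP); apply/monospanP => T; rewrite inE negb_and -leqNgt.
  rewrite /g lfunE !ffunE /=.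
  have [-> | nTS] := eqVneq T S; first by rewrite SM -[_ *: _]/(_ * _) mulr1 subrr.
  rewrite scaler0 subr0; case: ifP => //= TM leST; apply: uT.
  by rewrite ltn_neqAle leST andbT; apply: contra_neq nTS => /binary_inj.
have -> : mono K S = (u S)^-1 *: (linfun (restrict M) u - g).
  by rewrite /g opprB addrC subrK scalerA mulVf // scale1r.
by rewrite memvZ // memvB // memv_img.
Qed.

Lemma leading_card (U : {vspace sq}) M :
  (forall S, S \in M -> exists2 u, u \in U & leading u S) -> (#|M| <= \dim U)%N.
Proof.
move=> leadM; rewrite -dim_monospan.
apply: (leq_trans (dimvS (_ : monospan M <= linfun (restrict M) @: U)%VS)).
  by apply/span_subvP => g /mapP [S]; rewrite mem_enum => SM ->; apply: mono_restrict_img.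
by rewrite -(limg_ker_dim (linfun (restrict M)) U) leq_addl.
Qed.

Lemma card_lead_terms (U : {vspace sq}) : #|lead_terms U| = \dim U.
Proof.
apply/eqP; rewrite eqn_leq leading_card => [|S /lead_termsP //]; set L := lead_terms U.
have injL : (U :&: lker (linfun (restrict L)) = 0)%VS.
  apply/eqP; rewrite -subv0; apply/subvP => u.
  rewrite memv_cap memv_ker memv0 => /andP [Uu /eqP ru0]; apply: contraT => nz_u.
  have [S lS] := leading_exists nz_u; have SL : S \in L by apply/lead_termsP; exists u.
  by move/ffunP: ru0 => /(_ S); rewrite lfunE !ffunE SL => uS0; case: lS; rewrite uS0 eqxx.
rewrite -(limg_dim_eq injL) -(dim_monospan L) dimvS //.
apply/subvP => g /memv_imgP [u _ ->]; apply/monospanP => T nT.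
by rewrite lfunE ffunE (negPf nT).
Qed.

Lemma card_ushadow_lead_terms A (W : {vspace sq}) :
  (#|ushadow A (lead_terms W)| <= \dim (m1 A W))%N.
Proof.
apply: leading_card => Y /ushadowP [j [jA jY /lead_termsP [u Wu [uS uT]]]].
exists (xmul j u).
  have sWm1 : (linfun (xmul j) @: W <= m1 A W)%VS by apply: (sumv_sup j).
  by apply: (subvP sWm1); rewrite -[xmul j u]lfunE memv_img.
split=> [|T ltYT]; rewrite ffunE ?jY //; case: ifP => // jT; apply: uT.
by move: ltYT; rewrite (binaryD1 jY) (binaryD1 jT) ltn_add2r.
Qed.

Lemma lead_terms_sub (U : {vspace sq}) M : (U <= monospan M)%VS -> lead_terms U \subset M.
Proof.
move=> sUM; apply/subsetP => S /lead_termsP [u Uu [uS _]]; apply: contraT => nSM.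
by move/monospanP: (subvP sUM u Uu) => /(_ S nSM) u0; rewrite u0 eqxx in uS.
Qed.

Lemma gotzmann_monospanE A d M :
  gotzmann A d (monospan M) <-> shadow_minimal A d M.
Proof.
rewrite /gotzmann /homog -/(monospan _) -/(monospan _); split=> [[sM minM] | [sM minM]].
  have sMk : M \subset ksets A d.
    by apply/subsetP => X XM; rewrite -(mono_monospan (ksets A d)) (subvP sM) ?mono_monospan.
  split=> // F sF cF; have := minM (monospan F); rewrite !m1_monospan !dim_monospan.
  by apply => //; apply: monospanS.
split=> [|W sW dW]; first exact: monospanS.
rewrite m1_monospan dim_monospan; apply: leq_trans (card_ushadow_lead_terms A W).
by apply: minM; [apply: lead_terms_sub | rewrite card_lead_terms dW dim_monospan].
Qed.

End MonomialSpans.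

(** * Splitting along a variable *)

Section Decomposition.
Variables (n : nat) (i : 'I_n).
Local Notation N := (~: [set i]).
Implicit Types (X Y : {set 'I_n}) (F G L M : {set {set 'I_n}}) (r : nat).

Definition avoids G := forall X, X \in G -> i \notin X.
Definition insert G := [set i |: X | X in G].
Definition slice0 M := [set X in M | i \notin X].
Definition slice1 M := [set X : {set 'I_n} | (i \notin X) && (i |: X \in M)].

Lemma mem_insert G Y : avoids G -> (Y \in insert G) = (i \in Y) && (Y :\ i \in G).
Proof.
move=> aG; apply/imsetP/andP => [[X XG ->] | [iY YiG]].
  by rewrite setU11 setU1K ?aG.
by exists (Y :\ i); rewrite ?setD1K.
Qed.

Lemma slice_split M : M = slice0 M :|: insert (slice1 M).
Proof.
apply/setP => X; rewrite inE mem_insert => [|Y]; last by rewrite inE => /andP [].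
rewrite !inE; have [iX | iX] := boolP (i \in X); last by rewrite andbT orbF.
by rewrite andbF eqxx setD1K.
Qed.

Lemma avoids_ksets r G : G \subset ksets N r -> avoids G.
Proof.
move=> /subsetP sG X /sG; rewrite inE => /andP [/subsetP sXN _].
by apply/negP => /sXN; rewrite !inE eqxx.
Qed.

Lemma slice0_ksets r M : M \subset ksets [set: 'I_n] r -> slice0 M \subset ksets N r.
Proof.
move=> /subsetP sM; apply/subsetP => X; rewrite inE => /andP [/sM].
rewrite !inE => /andP [_ ->] iX; rewrite andbT; apply/subsetP => x xX; rewrite !inE.
by apply: contraNneq iX => <-.
Qed.

Lemma slice1_ksets r M : M \subset ksets [set: 'I_n] r.+1 -> slice1 M \subset ksets N r.
Proof.
move=> /subsetP sM; apply/subsetP => X; rewrite !inE => /andP [iX /sM].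
rewrite inE cardsU1 iX add1n eqSS => /andP [_ ->]; rewrite andbT.
by apply/subsetP => x xX; rewrite !inE; apply: contraNneq iX => <-.
Qed.

Lemma insert_ksets r L0 L1 : L0 \subset ksets N r.+1 -> L1 \subset ksets N r ->
  L0 :|: insert L1 \subset ksets [set: 'I_n] r.+1.
Proof.
move=> /subsetP sL0 /subsetP sL1; apply/subsetP => X /setUP [/sL0 | /imsetP [Y /sL1]].
  by rewrite !inE subsetT => /andP [].
rewrite inE => /andP [sYN /eqP cY] ->.
have iY : i \notin Y by apply/negP => /(subsetP sYN); rewrite !inE eqxx.
by rewrite inE subsetT (cardsU1 i Y) iY cY add1n eqxx.
Qed.

Lemma card_insert_setU G0 G1 : avoids G0 -> avoids G1 ->
  #|G0 :|: insert G1| = #|G0| + #|G1|.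
Proof.
move=> a0 a1; rewrite cardsU card_in_imset => [|X Y XG YG eXY]; last first.
  by rewrite -(setU1K (a1 X XG)) -(setU1K (a1 Y YG)) eXY.
suff -> : G0 :&: insert G1 = set0 by rewrite cards0 subn0.
apply/setP => X; rewrite !inE mem_insert //.
by apply/negbTE/andP => [[/a0 /negPf -> /andP []]].
Qed.

Lemma avoids_ushadow G : avoids G -> avoids (ushadow N G).
Proof.
move=> aG Y /ushadowP [j [jN jY /aG]]; rewrite !inE negb_and negbK.
by case/orP => // /eqP eij; rewrite -eij !inE eqxx in jN.
Qed.

Lemma avoidsU G1 G2 : avoids G1 -> avoids G2 -> avoids (G1 :|: G2).
Proof. by move=> a1 a2 X /setUP [/a1 | /a2]. Qed.

Lemma setD1C X a b : X :\ a :\ b = X :\ b :\ a.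
Proof. by rewrite !setDDl setUC. Qed.

(* The shadow of a family split along [x_i], as in [m_1 V = m_1 V_0 + x_i (V_0 + n_1 V_1)]. *)
Lemma ushadow_insert G0 G1 : avoids G0 -> avoids G1 ->
  ushadow [set: 'I_n] (G0 :|: insert G1) = ushadow N G0 :|: insert (G0 :|: ushadow N G1).
Proof.
move=> a0 a1; have a01 := avoidsU a0 (avoids_ushadow a1).
apply/setP => Y; apply/ushadowP/setUP => [[j [_ jY /setUP [YjG0 | YjG1]]] | ].
- have [eji | nji] := eqVneq j i.
    by right; rewrite mem_insert // -eji jY inE YjG0.
  by left; apply/ushadowP; exists j; rewrite !inE nji.
- move: YjG1; rewrite mem_insert // => /andP [iYj YjiG1].
  move: (iYj); rewrite in_setD1 => /andP [nij iY].
  right; rewrite mem_insert // iY inE; apply/orP; right.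
  by apply/ushadowP; exists j; rewrite !inE eq_sym nij jY setD1C.
case=> [/ushadowP [j [jN jY YjG0]] | ]; first by exists j; rewrite in_setT in_setU YjG0.
rewrite mem_insert // => /andP [iY /setUP [YiG0 | /ushadowP [j [jN jYi YijG1]]]].
  by exists i; rewrite in_setT in_setU YiG0.
move: (jYi); rewrite in_setD1 => /andP [nji jY]; exists j.
by rewrite in_setT in_setU mem_insert // !inE eq_sym nji iY setD1C YijG1 orbT.
Qed.

Lemma card_ushadow_insert G0 G1 : avoids G0 -> avoids G1 ->
  #|ushadow [set: 'I_n] (G0 :|: insert G1)| = #|ushadow N G0| + #|G0 :|: ushadow N G1|.
Proof.
move=> a0 a1; rewrite ushadow_insert // card_insert_setU //; first exact: avoids_ushadow.
exact: avoidsU a0 (avoids_ushadow a1).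
Qed.

Lemma shadow_minimal_slice0S r M :
  shadow_minimal [set: 'I_n] r.+1 M -> shadow_minimal N r.+1 (slice0 M).
Proof.
case=> sM minM; have sM0 := slice0_ksets sM; have sM1 := slice1_ksets sM.
split=> // F sF cF.
have [L0 [iL0 cL0 uL0]] := exists_initial_segment sF.
have [L1 [iL1 cL1 uL1]] := exists_initial_segment sM1.
have [[sL0 _] [sL1 _]] := (iL0, iL1).
have a0 := avoids_ksets sM0; have a1 := avoids_ksets sM1.
have b0 := avoids_ksets sL0; have b1 := avoids_ksets sL1.
have := minM _ (insert_ksets sL0 sL1).
rewrite [in #|M|](slice_split M) !card_insert_setU // cL0 cF cL1 => /(_ erefl).
rewrite [in ushadow _ M](slice_split M) !card_ushadow_insert //.
rewrite (card_initial_setU iL0 (initial_ushadow iL1)).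
have le_max : maxn #|L0| #|ushadow N L1| <= #|slice0 M :|: ushadow N (slice1 M)|.
  rewrite geq_max cL0 cF subset_leq_card ?subsetUl //=.
  by apply: leq_trans uL1 _; apply/subset_leq_card/subsetUr.
move=> le_sum; apply: leq_trans uL0; rewrite -(leq_add2r (maxn #|L0| #|ushadow N L1|)).
by apply: (leq_trans _ le_sum); rewrite leq_add2l.
Qed.

Lemma shadow_minimal_slice0 d M :
  shadow_minimal [set: 'I_n] d M -> shadow_minimal N d (slice0 M).
Proof.
case: d => [|r]; last exact: shadow_minimal_slice0S.
case=> sM _; have sM0 := slice0_ksets sM; split=> // F sF cF.
suff -> : F = slice0 M by [].
move: sF sM0 cF; rewrite ksets0 !subset1.
by do 2![case/orP => /eqP ->]; rewrite ?cards1 ?cards0.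
Qed.

Lemma xdecomp0_monospan (K : fieldType) d M : (forall S, S \in M -> #|S| = d) ->
  xdecomp0 i d (monospan K M) = monospan K (slice0 M).
Proof.
move=> sizeM; rewrite /xdecomp0 -/(monospan K _); congr (monospan K _).
apply/setP => X; rewrite !inE mono_monospan.
by case XM: (X \in M); rewrite ?andbF // andbT sizeM ?eqxx.
Qed.

End Decomposition.

Theorem proposition4p5 (K : fieldType) (n d : nat) (i : 'I_n)
  (V : {vspace sqf K n}) :
  monomial_space d V ->
  gotzmann [set: 'I_n] d V ->
  gotzmann (~: [set i]) d (xdecomp0 i d V).
Proof.
case=> M [sizeM ->] /gotzmann_monospanE minM.
by rewrite xdecomp0_monospan //; apply/gotzmann_monospanE/shadow_minimal_slice0.
Qed.
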